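(* Let $\mathcal A$ be a commutative unital $C^*$-algebra, let $(E,\langle\cdot,\cdot\rangle)$ be a Hilbert $\mathcal A$-module in which every closed submodule is orthogonally complemented, and let $\xi\in E$ with $\langle\xi,\xi\rangle$ invertible. Equip $E$ with the standard $\mathcal A$-2-inner product $\langle x,y|z\rangle=\langle x,y\rangle\langle z,z\rangle-\langle x,z\rangle\langle z,y\rangle$, and suppose $\{x_i\}_{i\in\mathbb N}\subset E$ satisfies, for some reals $0<A\le B$ and all $x\in E$, $$A\langle x,x|\xi\rangle\le\sum_{i}\langle x,x_i|\xi\rangle\langle x_i,x|\xi\rangle\le B\langle x,x|\xi\rangle.$$ Let $L_\xi^{\perp}=\{x\in E:\langle a\xi,x\rangle=0\ \text{for all } a\in\mathcal A\}$. Then there exist reals $0<C\le D$ such that $C\langle x,x\rangle\le\sum_i\langle x,x_i\rangle\langle x_i,x\rangle\le D\langle x,x\rangle$ for all $x\in L_\xi^\perp$; that is, $\{x_i\}$ is a frame for $L_\xi^\perp$.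
   Context: A Hilbert $\mathcal A$-module is a left $\mathcal A$-module $E$ with an $\mathcal A$-valued inner product $\langle\cdot,\cdot\rangle$ satisfying $\langle x,x\rangle\ge0$, $\langle x,x\rangle=0$ iff $x=0$, $\langle x,y\rangle=\langle y,x\rangle^*$, $\langle ax,by\rangle=a^*\langle x,y\rangle b$, complex-linear in the second variable, and complete for $\|x\|=\|\langle x,x\rangle\|^{1/2}$. Inequalities between elements of $\mathcal A$ refer to the order on self-adjoint elements; all series converge in norm. *)

From mathcomp Require Import all_boot all_order all_algebra.
From mathcomp Require Export complex.
From mathcomp Require Export reals.
Set Implicit Arguments. Unset Strict Implicit. Unset Printing Implicit Defensive.
Import Order.TTheory GRing.Theory Num.Theory.
Local Open Scope ring_scope.

Section CStar.
Variable R : realType.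
Local Notation C := R[i].
Variable A : comAlgType C.
Variables (star : A -> A) (nrm : A -> R).

Definition cle (a b : A) : Prop := exists c : A, b - a = star c * c.

Definition cvgA (u : nat -> A) (l : A) : Prop :=
  forall e : R, 0 < e -> exists N : nat, forall n, (N <= n)%N -> nrm (u n - l) < e.

Definition series_cvgA (u : nat -> A) (s : A) : Prop :=
  cvgA (fun n => \sum_(i < n) u i) s.

Definition cauchyA (u : nat -> A) : Prop :=
  forall e : R, 0 < e -> exists N : nat, forall m n, (N <= m)%N -> (N <= n)%N ->
    nrm (u m - u n) < e.

Record is_comm_unital_Cstar : Prop := {
  nrm_eq0 : forall a, nrm a = 0 -> a = 0;
  nrm_triangle : forall a b, nrm (a + b) <= nrm a + nrm b;
  nrm_scale : forall (c : C) a, nrm (c *: a) = Normc.normc c * nrm a;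
  nrm_submult : forall a b, nrm (a * b) <= nrm a * nrm b;
  nrm_complete : forall u, cauchyA u -> exists l, cvgA u l;
  star_add : forall a b, star (a + b) = star a + star b;
  star_scale : forall (c : C) a, star (c *: a) = (conjc c) *: star a;
  star_mul : forall a b, star (a * b) = star b * star a;
  star_invol : forall a, star (star a) = a;
  Cstar_identity : forall a, nrm (star a * a) = nrm a ^+ 2
}.

Section Hilbert.
Variable E : lmodType A.
Variable ip : E -> E -> A.

Definition nrmE (x : E) : R := Num.sqrt (nrm (ip x x)).

Definition cvgE (u : nat -> E) (l : E) : Prop :=
  forall e : R, 0 < e -> exists N : nat, forall n, (N <= n)%N -> nrmE (u n - l) < e.

Definition cauchyE (u : nat -> E) : Prop :=
  forall e : R, 0 < e -> exists N : nat, forall m n, (N <= m)%N -> (N <= n)%N ->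
    nrmE (u m - u n) < e.

Record is_Hilbert_module : Prop := {
  ip_pos : forall x, cle 0 (ip x x);
  ip_def : forall x, ip x x = 0 -> x = 0;
  ip_adj : forall x y, ip x y = star (ip y x);
  ip_scale : forall (a b : A) x y, ip (a *: x) (b *: y) = star a * ip x y * b;
  ip_addr : forall x y z, ip x (y + z) = ip x y + ip x z;
  ip_Clinr : forall (c : C) x y, ip x ((c%:A : A) *: y) = c *: ip x y;
  ip_complete : forall u, cauchyE u -> exists l, cvgE u l
}.

Definition submodule (M : E -> Prop) : Prop :=
  M 0 /\ (forall x y, M x -> M y -> M (x + y)) /\ (forall (a : A) x, M x -> M (a *: x)).

Definition closed_set (M : E -> Prop) : Prop :=
  forall (u : nat -> E) (l : E), (forall n, M (u n)) -> cvgE u l -> M l.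

Definition orth_complemented (M : E -> Prop) : Prop :=
  forall x : E, exists m n : E,
    [/\ M m, (forall y, M y -> ip y n = 0) & x = m + n].

Definition ip2 (x y z : E) : A := ip x y * ip z z - ip x z * ip z y.

Definition Lperp (xi : E) (x : E) : Prop := forall a : A, ip (a *: xi) x = 0.

End Hilbert.
End CStar.

From mathcomp Require Import all_boot all_order all_algebra.
From mathcomp Require Import complex reals.
From mathcomp Require Import ring lra.
Set Implicit Arguments. Unset Strict Implicit. Unset Printing Implicit Defensive.
Import Order.TTheory GRing.Theory Num.Theory.
Local Open Scope ring_scope.

(* For [x] orthogonal to [xi] the 2-inner products reduce to [<x,y|xi> = <x,y> g]
   with [g = <xi,xi>], so the frame inequality for [x] reads
   [a <x,x> g <= S g^2 <= b <x,x> g], [S] being the frame sum of [x].  Multiplying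
   by [h^2], where [h = g^-1], gives [a <x,x> h <= S <= b <x,x> h], and the
   spectral bounds [tau_g <= h <= 1/tau_h], with [tau_t = 1/(2(|t| + 1))], give the
   constants.  These bounds come from square roots of [1 - tau_t t], obtained as
   fixed points of a contraction. *)

Lemma normc_real (R : realType) (r : R) : Normc.normc (real_complex R r) = `|r|.
Proof. by rewrite /= expr0n /= addr0 sqrtr_sqr. Qed.

Lemma conjc_real (R : realType) (r : R) : conjc (real_complex R r) = real_complex R r.
Proof. by rewrite /conjc /= oppr0. Qed.

Lemma geometric_half_small (R : realType) (e : R) : 0 < e -> exists N : nat, (2^-1) ^+ N < e.
Proof.
move=> e0; have /archi_boundP : 0 <= e^-1 by rewrite invr_ge0 ltW.
set N := Num.Def.archi_bound _ => ltN; exists N.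
have le_pow : forall n : nat, n%:R <= (2 : R) ^+ n.
  elim=> [|n ih]; first by rewrite expr0 ler01.
  have : 1 <= (2 : R) ^+ n by rewrite exprn_ege1 ?ler1n.
  by rewrite exprS -addn1 natrD; lra.
rewrite exprVn -[e]invrK ltf_pV2 ?posrE ?invr_gt0 ?exprn_gt0 //.
exact: lt_le_trans ltN (le_pow N).
Qed.

(* Lets [ring] check identities that hold only modulo [g * h = 1]. *)
Lemma eq_modulo_inverse (A : comPzRingType) (g h u v c : A) :
  g * h = 1 -> u - v = c * (g * h - 1) -> u = v.
Proof. by move=> gh; rewrite gh subrr mulr0 => /eqP; rewrite subr_eq0 => /eqP. Qed.

Section CStarAlgebra.
Variables (R : realType) (A : comAlgType R[i]) (star : A -> A) (nrm : A -> R).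
Hypothesis HA : is_comm_unital_Cstar star nrm.

Local Notation rc := (real_complex R).

Lemma nrmZ_real r a : nrm (rc r *: a) = `|r| * nrm a.
Proof. by rewrite (nrm_scale HA) normc_real. Qed.

Lemma nrm0 : nrm 0 = 0.
Proof. by rewrite -(scale0r (0 : A)) -[0 : R[i]]/(rc 0) nrmZ_real normr0 mul0r. Qed.

Lemma nrmN a : nrm (- a) = nrm a.
Proof. by rewrite -scaleN1r -(rmorphN1 (real_complex R)) nrmZ_real normrN normr1 mul1r. Qed.

Lemma nrm_ge0 a : 0 <= nrm a.
Proof. by have := nrm_triangle HA a (- a); rewrite subrr nrm0 nrmN; lra. Qed.

Lemma nrm_distC a b : nrm (a - b) = nrm (b - a).
Proof. by rewrite -nrmN opprB. Qed.

Lemma nrm_dist_triangle a b c : nrm (a - c) <= nrm (a - b) + nrm (b - c).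
Proof. by have := nrm_triangle HA (a - b) (b - c); rewrite addrA subrK. Qed.

Lemma star0 : star 0 = 0.
Proof. by apply: (addrI (star 0)); rewrite -(star_add HA) !addr0. Qed.

Lemma starB a b : star (a - b) = star a - star b.
Proof.
have starN c : star (- c) = - star c.
  by apply/eqP; rewrite -subr_eq0 opprK -(star_add HA) addNr star0.
by rewrite (star_add HA) starN.
Qed.

Lemma star1 : star 1 = 1.
Proof. by rewrite -[star 1]mulr1 -{2}(star_invol HA 1) -(star_mul HA) mulr1 (star_invol HA). Qed.

Lemma starZ_real r a : star (rc r *: a) = rc r *: star a.
Proof. by rewrite (star_scale HA) conjc_real. Qed.

Lemma star_alg_real r : star (rc r)%:A = (rc r)%:A.
Proof. by rewrite starZ_real star1. Qed.

Lemma nrm_star a : nrm (star a) = nrm a.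
Proof.
have le_star b : nrm b <= nrm (star b).
  have [->|b_neq0] := eqVneq (nrm b) 0; first exact: nrm_ge0.
  have b_gt0 : 0 < nrm b by rewrite lt_def b_neq0 nrm_ge0.
  have := nrm_submult HA (star b) b; rewrite (Cstar_identity HA) expr2.
  by rewrite ler_pM2r.
by apply/le_anti; rewrite le_star /= -{2}(star_invol HA a) le_star.
Qed.

Lemma cvgA_unique u l1 l2 : cvgA nrm u l1 -> cvgA nrm u l2 -> l1 = l2.
Proof.
move=> cvg1 cvg2; apply/eqP; rewrite -subr_eq0; apply/eqP/(nrm_eq0 HA).
apply/le_anti; rewrite nrm_ge0 andbT; apply/ler_addgt0Pr => e e0.
have e2 : 0 < e / 2 by rewrite divr_gt0.
have [N1 hN1] := cvg1 _ e2; have [N2 hN2] := cvg2 _ e2.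
have := hN1 _ (leq_maxl N1 N2); have := hN2 _ (leq_maxr N1 N2).
have := nrm_dist_triangle l1 (u (maxn N1 N2)) l2; rewrite (nrm_distC l1 (u _)).
lra.
Qed.

Lemma cvgA_mulr u l w : cvgA nrm u l -> cvgA nrm (fun n => u n * w) (l * w).
Proof.
move=> cvg_u e e0; have w0 := nrm_ge0 w.
have e1 : 0 < e / (nrm w + 1) by rewrite divr_gt0 // ltr_wpDl.
have [N hN] := cvg_u _ e1; exists N => n /hN; rewrite -mulrBl.
rewrite ltr_pdivlMr ?ltr_wpDl // => ltX.
apply: le_lt_trans (nrm_submult HA _ _) _.
have := nrm_ge0 (u n - l); nra.
Qed.

Lemma series_cvgA_mulr u v s w : (forall i, v i = u i * w) ->
  series_cvgA nrm u s -> series_cvgA nrm v (s * w).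
Proof.
move=> vu /(cvgA_mulr w) cvg_uw e /cvg_uw[N hN]; exists N => n Nn.
by under eq_bigr do rewrite vu; rewrite -mulr_suml; apply: hN.
Qed.

Lemma cvgA_nrm_le u l r : cvgA nrm u l -> (forall n, nrm (u n) <= r) -> nrm l <= r.
Proof.
move=> cvg_u u_le; apply/ler_addgt0Pr => e /cvg_u[N /(_ N (leqnn N))].
have := nrm_triangle HA (u N) (l - u N); rewrite addrC subrK nrm_distC.
have := u_le N; lra.
Qed.

Section Contraction.
Variables (F : A -> A) (r : R).
Hypothesis r_ge0 : 0 <= r.
Hypothesis F_ball : forall w, nrm w <= r -> nrm (F w) <= r.
Hypothesis F_contract : forall v w, nrm v <= r -> nrm w <= r ->
  nrm (F v - F w) <= 2^-1 * nrm (v - w).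

Let z n := iter n F 0.

Lemma iter_ball n : nrm (z n) <= r.
Proof. by elim: n => [|n ih]; [rewrite /z /= nrm0 | exact: F_ball]. Qed.

Lemma iter_step n : nrm (z n.+1 - z n) <= (2^-1) ^+ n * nrm (F 0).
Proof.
elim: n => [|n ih]; first by rewrite /z /= subr0 expr0 mul1r.
change (nrm (F (z n.+1) - F (z n)) <= (2^-1) ^+ n.+1 * nrm (F 0)).
apply: le_trans (F_contract (iter_ball n.+1) (iter_ball n)) _.
by rewrite exprS -mulrA ler_wpM2l ?invr_ge0 ?ler0n.
Qed.

Lemma iter_dist n k :
  nrm (z (n + k) - z n) <= 2 * nrm (F 0) * ((2^-1) ^+ n - (2^-1) ^+ (n + k)).
Proof.
elim: k => [|k ih]; first by rewrite !addn0 !subrr nrm0 mulr0.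
rewrite addnS; apply: le_trans (nrm_dist_triangle _ (z (n + k)) _) _.
by have := iter_step (n + k); rewrite exprS; lra.
Qed.

Lemma iter_cauchy : cauchyA nrm z.
Proof.
have D0 : 0 < 2 * nrm (F 0) + 1 by have := nrm_ge0 (F 0); lra.
have h0 : (0 : R) <= 2^-1 by rewrite invr_ge0 ler0n.
move=> e e0; have [N ltN] := geometric_half_small (divr_gt0 e0 D0).
rewrite ltr_pdivlMr // in ltN; exists N.
suff near k n : (N <= n)%N -> nrm (z (n + k) - z n) < e.
  move=> m n Nm Nn; case: (leqP n m) => [/subnKC <- | /ltnW/subnKC <-].
    exact: near.
  by rewrite nrm_distC; apply: near.
move=> Nn; apply: le_lt_trans (iter_dist n k) _.
have : (2^-1) ^+ n <= (2^-1 : R) ^+ N by rewrite ler_wiXn2l // invf_le1 ?ler1n.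
have := exprn_ge0 (n + k) h0; have := exprn_ge0 N h0; have := nrm_ge0 (F 0).
nra.
Qed.

Lemma contraction_fixpoint : exists l, nrm l <= r /\ F l = l.
Proof.
have [l cvg_l] := nrm_complete HA iter_cauchy.
have l_ball : nrm l <= r := cvgA_nrm_le cvg_l iter_ball.
exists l; split => //; apply: (@cvgA_unique (fun n => z n.+1)).
  move=> e /cvg_l[N hN]; exists N => n /hN; apply: le_lt_trans.
  change (nrm (F (z n) - F l) <= nrm (z n - l)).
  have := F_contract (iter_ball n) l_ball; have := nrm_ge0 (z n - l); lra.
move=> e /cvg_l[N hN]; exists N => n /leqW /hN; exact: le_lt_trans.
Qed.

Lemma contraction_fixpoint_unique l l' :
  nrm l <= r -> nrm l' <= r -> F l = l -> F l' = l' -> l = l'.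
Proof.
move=> l_ball l'_ball Fl Fl'; apply/eqP; rewrite -subr_eq0; apply/eqP/(nrm_eq0 HA).
have := F_contract l_ball l'_ball; rewrite Fl Fl'.
have := nrm_ge0 (l - l'); lra.
Qed.

End Contraction.

(* [1 - t = (1 - l)^2] for the fixed point [l = (t + l^2)/2], which exists
   because [w |-> (t + w^2)/2] is a 1/2-contraction of the ball of radius 1/2. *)
Lemma sqrt_one_sub t : star t = t -> nrm t <= 2^-1 -> exists y, 1 - t = star y * y.
Proof.
move=> t_sa t_small.
pose F w := rc (2^-1) *: (t + w * w).
have h0 : (0 : R) <= 2^-1 by rewrite invr_ge0 ler0n.
have nrmF w : nrm (F w) <= 2^-1 * (nrm t + nrm w * nrm w).
  rewrite nrmZ_real ger0_norm // ler_wpM2l //.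
  by apply: le_trans (nrm_triangle HA _ _) _; rewrite lerD2l (nrm_submult HA).
have F_ball w : nrm w <= 2^-1 -> nrm (F w) <= 2^-1.
  by move=> w_small; apply: le_trans (nrmF w) _; have := nrm_ge0 w; nra.
have F_contract v w : nrm v <= 2^-1 -> nrm w <= 2^-1 ->
    nrm (F v - F w) <= 2^-1 * nrm (v - w).
  move=> v_small w_small.
  have -> : F v - F w = rc (2^-1) *: ((v - w) * (v + w)).
    by rewrite -scalerBr; congr (_ *: _); ring.
  rewrite nrmZ_real ger0_norm // ler_wpM2l //.
  apply: le_trans (nrm_submult HA _ _) _.
  have := nrm_triangle HA v w; have := nrm_ge0 (v - w); have := nrm_ge0 (v + w).
  nra.
have [l [l_small Fl]] := contraction_fixpoint h0 F_ball F_contract.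
have l_sa : star l = l.
  apply: (contraction_fixpoint_unique F_contract) => //; first by rewrite nrm_star.
  by rewrite -{2}Fl /F starZ_real (star_add HA) (star_mul HA) t_sa.
have t_eq : t = l + l - l * l.
  have : rc 2 *: F l = rc 2 *: l by rewrite Fl.
  rewrite /F scalerA -rmorphM mulfV ?pnatr_eq0 // scale1r => tl.
  by rewrite -[t](addrK (l * l)) tl -[2 : R]/(2%:R) rmorph_nat scaler_nat mulr2n.
by exists (1 - l); rewrite starB star1 l_sa t_eq; ring.
Qed.

(* [shrink t *: t] has norm at most 1/2. *)
Definition shrink (t : A) : R := (2 * (nrm t + 1))^-1.

Lemma shrink_gt0 t : 0 < shrink t.
Proof. by rewrite invr_gt0; have := nrm_ge0 t; lra. Qed.

Lemma shrink_le1 t : shrink t <= 1.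
Proof. by rewrite invf_le1; have := nrm_ge0 t; lra. Qed.

Lemma one_sub_shrink_square t : star t = t ->
  exists y, 1 - rc (shrink t) *: t = star y * y.
Proof.
move=> t_sa; apply: sqrt_one_sub; first by rewrite starZ_real t_sa.
rewrite nrmZ_real (ger0_norm (ltW (shrink_gt0 t))) mulrC ler_pdivrMr.
  by have := nrm_ge0 t; lra.
by rewrite mulr_gt0 // ltr_pwDr ?nrm_ge0.
Qed.

Lemma alg_realM x y : (rc (x * y))%:A = (rc x)%:A * (rc y)%:A :> A.
Proof. by rewrite mulr_algl scalerA -rmorphM. Qed.

Lemma scale_square r w : 0 <= r -> exists v, (rc r)%:A * (star w * w) = star v * v.
Proof.
move=> r0; exists ((rc (Num.sqrt r))%:A * w).
rewrite (star_mul HA) star_alg_real -{1}(sqr_sqrtr r0) expr2 alg_realM; ring.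
Qed.

Lemma star_inverse g h : star g = g -> h * g = 1 -> star h = h.
Proof.
move=> g_sa hg; have : star h * g = 1 by rewrite -g_sa -(star_mul HA) mulrC hg star1.
by move=> hg'; rewrite -[star h]mulr1 -hg mulrA mulrAC hg' mul1r.
Qed.

(* [h - shrink g = h (1 - shrink g *: g)] is a product of commuting squares. *)
Lemma inverse_ge_shrink g h k : g = star k * k -> h * g = 1 ->
  exists w, h - (rc (shrink g))%:A = star w * w.
Proof.
move=> gk hg; have g_sa : star g = g by rewrite gk (star_mul HA) (star_invol HA).
have h_sa := star_inverse g_sa hg.
have [y hy] := one_sub_shrink_square g_sa.
exists (k * h * y); rewrite !(star_mul HA) h_sa.
have -> : star y * (h * star k) * (k * h * y) = (star y * y) * (h * (star k * k) * h).
  by ring.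
by rewrite -hy -gk hg mul1r mulrBl mul1r -scalerAl (mulrC g h) hg.
Qed.

End CStarAlgebra.

Section HilbertModule.
Variables (R : realType) (A : comAlgType R[i]) (star : A -> A) (nrm : A -> R).
Variables (E : lmodType A) (ip : E -> E -> A).
Hypothesis HA : is_comm_unital_Cstar star nrm.
Hypothesis HE : is_Hilbert_module star nrm ip.

Local Notation rc := (real_complex R).

Lemma ip_addl x y z : ip (x + y) z = ip x z + ip y z.
Proof. by rewrite (ip_adj HE) (ip_addr HE) (star_add HA) -!(ip_adj HE). Qed.

Lemma ip_orth_sym x y : ip x y = 0 -> ip y x = 0.
Proof. by move=> xy; rewrite (ip_adj HE) xy (star0 HA). Qed.

Lemma ip2_orth_l x y z : ip x z = 0 -> ip2 ip x y z = ip x y * ip z z.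
Proof. by move=> xz; rewrite /ip2 xz mul0r subr0. Qed.

Lemma ip2_orth_r x y z : ip z x = 0 -> ip2 ip y x z = ip y x * ip z z.
Proof. by move=> zx; rewrite /ip2 zx mulr0 subr0. Qed.

(* Positivity is witnessed by a single square, so a sum of two positive terms is
   realised as the inner square of [u x + v e]. *)
Lemma orth_comb_square x e u v : ip e x = 0 -> ip e e = 1 ->
  exists w, star u * u * ip x x + star v * v = star w * w.
Proof.
move=> ex ee; have xe := ip_orth_sym ex.
have [w hw] := ip_pos HE (u *: x + v *: e); exists w; rewrite -hw subr0.
rewrite ip_addl !(ip_addr HE) !(ip_scale HE) ex xe ee !mulr0 !mul0r addr0 add0r.
by rewrite mulr1 mulrAC.
Qed.

Lemma ip_normalize xi k h : ip xi xi = star k * k -> h * ip xi xi = 1 ->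
  ip ((k * h) *: xi) ((k * h) *: xi) = 1.
Proof.
move=> gk hg; have h_sa : star h = h.
  by apply: (star_inverse HA _ hg); rewrite -(ip_adj HE).
rewrite (ip_scale HE) (star_mul HA) h_sa.
have -> : h * star k * ip xi xi * (k * h) = (h * ip xi xi) * (h * (star k * k)) by ring.
by rewrite -gk hg mulr1.
Qed.

Lemma frame_lower_bound_orth x e g h s wl (a tau : R) :
  0 <= a -> ip e x = 0 -> ip e e = 1 -> g * h = 1 -> star h = h ->
  h - (rc tau)%:A = star wl * wl ->
  cle star (rc a *: (ip x x * g)) s -> cle star (rc (a * tau) *: ip x x) (s * (h * h)).
Proof.
move=> a0 ex ee gh h_sa hwl [p hp].
have [w hw] := scale_square HA wl a0.
have [W hW] := orth_comb_square w (p * h) ex ee.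
have -> : s = rc a *: (ip x x * g) + star p * p by rewrite -hp addrC subrK.
exists W; rewrite -hW -hw -hwl (star_mul HA) h_sa.
rewrite -(mulr_algl (rc a) (ip x x * g)) -(mulr_algl (rc (a * tau))) alg_realM.
by apply: (@eq_modulo_inverse _ g h _ _ ((rc a)%:A * ip x x * h)) => //; ring.
Qed.

Lemma frame_upper_bound_orth x e g h s wu (b d tau : R) :
  0 <= d -> b = d * tau -> ip e x = 0 -> ip e e = 1 -> g * h = 1 -> star h = h ->
  1 - rc tau *: h = star wu * wu ->
  cle star s (rc b *: (ip x x * g)) -> cle star (s * (h * h)) (rc d *: ip x x).
Proof.
move=> d0 -> ex ee gh h_sa hwu [q hq].
have [w hw] := scale_square HA wu d0.
have [W hW] := orth_comb_square w (q * h) ex ee.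
have -> : s = rc (d * tau) *: (ip x x * g) - star q * q.
  by rewrite -hq opprB addrC subrK.
exists W; rewrite -hW -hw -hwu (star_mul HA) h_sa.
rewrite -(mulr_algl (rc (d * tau))) -(mulr_algl (rc d) (ip x x)) -(mulr_algl (rc tau)).
rewrite alg_realM.
by apply: (@eq_modulo_inverse _ g h _ _ (- ((rc d)%:A * (rc tau)%:A * ip x x * h))) => //; ring.
Qed.

End HilbertModule.

Theorem proposition2p3 (R : realType) (A : comAlgType R[i])
    (star : A -> A) (nrm : A -> R) (E : lmodType A) (ip : E -> E -> A)
    (HA : is_comm_unital_Cstar star nrm)
    (HE : is_Hilbert_module star nrm ip)
    (Hcompl : forall M : E -> Prop, submodule M -> closed_set nrm ip M ->
                orth_complemented ip M)
    (xi : E) (Hxi : exists b : A, b * ip xi xi = 1)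
    (x_ : nat -> E) (a b : R) (Ha : 0 < a) (Hab : a <= b)
    (Hframe : forall x : E, exists s : A,
        [/\ series_cvgA nrm (fun i => ip2 ip x (x_ i) xi * ip2 ip (x_ i) x xi) s,
            cle star ((real_complex R a) *: ip2 ip x x xi) s
          & cle star s ((real_complex R b) *: ip2 ip x x xi)]) :
  exists c d : R, [/\ 0 < c, c <= d &
    forall x : E, Lperp ip xi x -> exists s : A,
      [/\ series_cvgA nrm (fun i => ip x (x_ i) * ip (x_ i) x) s,
          cle star ((real_complex R c) *: ip x x) s
        & cle star s ((real_complex R d) *: ip x x)]].
Proof.
have [h hg] := Hxi; have [k] := ip_pos HE xi; rewrite subr0 => gk.
have ee := ip_normalize HA HE gk hg.
set g := ip xi xi in gk hg; have gh : g * h = 1 by rewrite mulrC.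
have h_sa : star h = h by apply: (star_inverse HA _ hg); rewrite -(ip_adj HE).
have [wl hwl] := inverse_ge_shrink HA gk hg.
have [wu hwu] := one_sub_shrink_square HA h_sa.
have [tg_gt0 th_gt0] := (shrink_gt0 HA g, shrink_gt0 HA h).
exists (a * shrink nrm g), (b / shrink nrm h); split; first exact: mulr_gt0.
  apply: le_trans (ler_piMr (ltW Ha) (shrink_le1 HA g)) _.
  by rewrite ler_pdivlMr //; have := shrink_le1 HA h; nra.
move=> x x_perp; have ex := x_perp (k * h).
have xix : ip xi x = 0 by have := x_perp 1; rewrite scale1r.
have xxi := ip_orth_sym HA HE xix.
have [s [s_cvg s_lo s_up]] := Hframe x.
rewrite ip2_orth_l // -/g in s_lo s_up.
exists (s * (h * h)); split.
- apply: (series_cvgA_mulr HA _ s_cvg) => i; rewrite ip2_orth_l // ip2_orth_r // -/g.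
  apply: (@eq_modulo_inverse _ g h _ _ (- (ip x (x_ i) * ip (x_ i) x * (g * h + 1)))) => //.
  by ring.
- exact (frame_lower_bound_orth HA HE (ltW Ha) ex ee gh h_sa hwl s_lo).
- have d0 : 0 <= b / shrink nrm h by rewrite divr_ge0 ?ltW //; lra.
  have bd : b = b / shrink nrm h * shrink nrm h by rewrite divfK // gt_eqF.
  exact (frame_upper_bound_orth HA HE d0 bd ex ee gh h_sa hwu s_up).
Qed.
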